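(* Let $K=\mathbb{R}$ and assume $\tau_{(i)}>0$, $\eta_{(i)}>-1$, $\eta_{(i)}\neq0$ for all $i\in\Omega$. For $X\subseteq\Omega$ and $D,A\in\mathcal{I}^{\mathbf{c}}(X)$ with $A\subsetneqq D$, we have $\pi(X,D)\neq\pi(X,A)$ and $\pi(X,D)\curlyeqprec\pi(X,A)$.
   Context: $\Omega$ is a finite set and $\mathbf{P}=(\Omega,\preccurlyeq_{\mathbf{P}})$ a poset. For $Y\subseteq\Omega$: $\max(Y)$ is the set of maximal elements of $Y$ w.r.t. $\preccurlyeq_{\mathbf{P}}$; $\mathcal{I}(Y)$ is the set of down-closed subsets of $Y$ with the induced order; $\mathcal{I}^{\mathbf{c}}(Y)$ is the set of up-closed subsets of $Y$. $\tau,\eta\in\mathbb{R}^{\Omega}$. For $D,I\subseteq\Omega$, $\varphi(D,I)=(-1)^{|I\cap D|}\big(\prod_{i\in I-\max(I)}\tau_{(i)}\big)\big(\prod_{i\in\max(I)-D}\eta_{(i)}\big)$ if $I\cap D\subseteq\max(I)$, and $0$ otherwise; for $D\subseteq Y\subseteq\Omega$, $\pi(Y,D)=\sum_{I\in\mathcal{I}(Y)}\varphi(D,I)x^{|I|}\in\mathbb{R}[x]$. For $f\in\mathbb{R}[x]$, $f_{(k)}$ is the coefficient of $x^k$. The total order $\curlyeqprec$ on $\mathbb{R}[x]$: $f\curlyeqprec g$ iff (i) $f=g$, or (ii) $\deg f\leqslant\deg g-1$, or (iii) $\deg f=\deg g$ and there exists $k\in\mathbb{N}$ with $f_{(k)}<g_{(k)}$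 and $f\equiv g\pmod{x^k}$. *)

From HB Require Import structures.
From mathcomp Require Import all_boot all_order all_algebra.
From mathcomp Require Import reals.
Set Implicit Arguments. Unset Strict Implicit. Unset Printing Implicit Defensive.
Import Order.TTheory GRing.Theory Num.Theory.
Local Open Scope ring_scope.

Section Defs.
Context {disp : Order.disp_t} {T : finPOrderType disp} {R : realType}.
Variables (tau eta : T -> R).

Definition maxset_of (Y : {set T}) : {set T} :=
  [set y in Y | [forall z in Y, ((y <= z)%O) ==> (z == y)]].

Definition downclosed (Y I : {set T}) : bool :=
  (I \subset Y) && [forall i in I, forall j in Y, ((j <= i)%O) ==> (j \in I)].

(* I is an up-closed subset of Y (an element of I^c(Y)) *)
Definition upclosed (Y I : {set T}) : bool :=
  (I \subset Y) && [forall i in I, forall j in Y, ((i <= j)%O) ==> (j \in I)].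

Definition phi_coef (D I : {set T}) : R :=
  if (I :&: D) \subset maxset_of I then
    (-1) ^+ #|I :&: D| * (\prod_(i in I :\: maxset_of I) tau i)
      * (\prod_(i in maxset_of I :\: D) eta i)
  else 0.

Definition pi_poly (Y D : {set T}) : {poly R} :=
  \sum_(I : {set T} | downclosed Y I) phi_coef D I *: 'X^#|I|.
End Defs.

(* The total order on R[x]:  f <= g iff f = g, or deg f <= deg g - 1,
   or deg f = deg g and some k has f_(k) < g_(k) and f = g mod x^k.
   Degrees are compared via size (= deg + 1, size 0 = 0). *)
Definition polyle {R : realType} (f g : {poly R}) : Prop :=
  f = g \/ (size f < size g)%N \/
  (size f = size g /\ exists k : nat, f`_k < g`_k /\ ('X^k %| f - g)%R).

From HB Require Import structures.
From mathcomp Require Import all_boot all_order all_algebra.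
From mathcomp Require Import reals.
From mathcomp Require Import zify.
Import Order.TTheory GRing.Theory Num.Theory.
Local Open Scope ring_scope.

(* For up-closed D, phi(D, I) <> 0 forces I :&: D to consist of minimal
   elements of D.  Hence the down-sets contributing to pi(X, D) have at most
   |X :\: D| + |min D| elements, with equality only for (X :\: D) :|: min D,
   whose coefficient is nonzero: deg pi(X, D) = |X :\: D| + |min D|, which does
   not increase when D grows.
   Let s be the least size of downset X e for e in D :\: A.  Down-sets with
   fewer than s elements miss D :\: A, so they contribute equally to pi(X, D)
   and pi(X, A).  Those with s elements meeting D :\: A are the downset X e of
   minimizers e, for which downset X e :&: D = [set e] and
   downset X e :&: A = set0, so that
   phi(D, downset X e) - phi(A, downset X e) = -(1 + eta e) * prod_(i < e) tau i,
   which is negative.  So the lowest coefficient where pi(X, D) and pi(X, A)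
   differ is that of x^s, and it is the smaller one in pi(X, D). *)

Section UpDownSets.
Context {disp : Order.disp_t} {T : finPOrderType disp}.
Implicit Types (X D A I : {set T}) (e x : T).

Definition minset_of D : {set T} :=
  [set d in D | [forall z in D, ((z <= d)%O) ==> (z == d)]].

Definition downset X e : {set T} := [set x in X | (x <= e)%O].

Definition lead_set X D : {set T} := (X :\: D) :|: minset_of D.

Definition pi_deg X D : nat := (#|X :\: D| + #|minset_of D|)%N.

Lemma downclosed_sub {X I} : downclosed X I -> I \subset X.
Proof. by case/andP. Qed.

Lemma upclosed_sub {X D} : upclosed X D -> D \subset X.
Proof. by case/andP. Qed.

Lemma downclosed_mem {X I e x} :
  downclosed X I -> e \in I -> x \in X -> (x <= e)%O -> x \in I.
Proof.
case/andP=> _ /forall_inP I_down eI xX.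
by move/forall_inP: (I_down e eI) => /(_ x xX) /implyP.
Qed.

Lemma upclosed_mem {X D e x} :
  upclosed X D -> e \in D -> x \in X -> (e <= x)%O -> x \in D.
Proof.
case/andP=> _ /forall_inP D_up eD xX.
by move/forall_inP: (D_up e eD) => /(_ x xX) /implyP.
Qed.

Lemma minset_sub D : minset_of D \subset D.
Proof. by apply/subsetP => x; rewrite inE => /andP[]. Qed.

Lemma downset_downclosed X e : downclosed X (downset X e).
Proof.
apply/andP; split; first by apply/subsetP => x; rewrite inE => /andP[].
apply/forall_inP => i; rewrite inE => /andP[_ ie].
apply/forall_inP => j jX; apply/implyP => ji.
by rewrite inE jX (le_trans ji ie).
Qed.

Lemma downset_subset {X I x} : downclosed X I -> x \in I -> downset X x \subset I.
Proof.
move=> I_down xI; apply/subsetP => j; rewrite inE => /andP[jX jx].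
exact: downclosed_mem I_down xI jX jx.
Qed.

Lemma maxset_of_downset {X e} : e \in X -> maxset_of (downset X e) = [set e].
Proof.
move=> eX; have e_down : e \in downset X e by rewrite inE eX lexx.
apply/setP => x; rewrite /maxset_of inE in_set1; apply/andP/eqP => [[]|->].
  rewrite inE => /andP[_ xe] /forall_inP /(_ e e_down).
  by rewrite xe eq_sym => /eqP.
split=> //; apply/forall_inP => z; rewrite inE => /andP[_ ze].
by apply/implyP => ez; rewrite eq_le ze ez.
Qed.

Lemma downsetI_upclosed X A e :
  upclosed X A -> e \in X -> e \notin A -> downset X e :&: A = set0.
Proof.
move=> A_up eX eA; apply/setP => x; rewrite !inE.
apply/negbTE/negP => /andP[/andP[_ xe] xA].
by move: eA; rewrite (upclosed_mem A_up xA eX xe).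
Qed.

Lemma meet_sub_minset {X D I} : upclosed X D -> downclosed X I ->
  I :&: D \subset maxset_of I -> I :&: D \subset minset_of D.
Proof.
move=> D_up I_down ID_max; apply/subsetP => a /setIP[aI aD].
rewrite inE aD; apply/forall_inP => z zD; apply/implyP => za.
have zI := downclosed_mem I_down aI (subsetP (upclosed_sub D_up) z zD) za.
have /subsetP/(_ z) := ID_max; rewrite inE zI zD /maxset_of inE => /(_ isT).
by case/andP=> _ /forall_inP /(_ a aI); rewrite za eq_sym.
Qed.

Lemma lead_setI X D : lead_set X D :&: D = minset_of D.
Proof.
by rewrite setIUl (setIidPl (minset_sub D)) setDE -setIA (setIC _ D) setICr setI0 set0U.
Qed.

Lemma lead_setD X D : lead_set X D :\: D = X :\: D.
Proof.
rewrite setDUl setDDl setUid.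
have /eqP -> : minset_of D :\: D == set0 by rewrite setD_eq0 minset_sub.
by rewrite setU0.
Qed.

Lemma mem_lead_setD {X D x} : x \in lead_set X D -> x \in D -> x \in minset_of D.
Proof. by move=> xL xD; rewrite -(lead_setI X D) inE xL xD. Qed.

Lemma lead_set_downclosed {X D} : upclosed X D -> downclosed X (lead_set X D).
Proof.
move=> D_up; have DX := upclosed_sub D_up.
have LX : lead_set X D \subset X.
  by rewrite subUset subsetDl (subset_trans (minset_sub D) DX).
apply/andP; split=> //; apply/forall_inP => i iL.
apply/forall_inP => j jX; apply/implyP => ji.
case jD: (j \in D); last by rewrite !inE jD jX.
have iD := upclosed_mem D_up jD (subsetP LX i iL) ji.
move: (mem_lead_setD iL iD); rewrite inE => /andP[_ /forall_inP /(_ j jD)].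
by rewrite ji => /eqP ->; rewrite inE (mem_lead_setD iL iD) orbT.
Qed.

Lemma lead_set_meet_max {X D} :
  upclosed X D -> lead_set X D :&: D \subset maxset_of (lead_set X D).
Proof.
move=> D_up; have LX := downclosed_sub (lead_set_downclosed D_up).
rewrite lead_setI; apply/subsetP => a aM.
have aD := subsetP (minset_sub D) a aM.
rewrite /maxset_of inE [a \in lead_set X D]inE aM orbT /=.
apply/forall_inP => z zL; apply/implyP => az.
have zD := upclosed_mem D_up aD (subsetP LX z zL) az.
move: (mem_lead_setD zL zD); rewrite inE => /andP[_ /forall_inP /(_ a aD)].
by move=> /implyP /(_ az); rewrite eq_sym.
Qed.

Lemma card_lead_set X D : #|lead_set X D| = pi_deg X D.
Proof.
by rewrite -(cardsID D) lead_setI lead_setD addnC.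
Qed.

Lemma card_meet_max_leqif {X D I} : upclosed X D -> downclosed X I ->
  I :&: D \subset maxset_of I -> (#|I| <= pi_deg X D ?= iff (I == lead_set X D))%N.
Proof.
move=> D_up I_down ID_max.
have ID_min := meet_sub_minset D_up I_down ID_max.
have IdD_XdD : I :\: D \subset X :\: D := setSD D (downclosed_sub I_down).
have [le_card eq_card] :=
  leqif_add (subset_leqif_cards IdD_XdD) (subset_leqif_cards ID_min).
rewrite -(cardsID D I) addnC /pi_deg; split=> //; rewrite eq_card.
apply/andP/eqP => [[/eqP IdD /eqP ID]|->].
  by rewrite /lead_set -IdD -ID setUC setID.
by rewrite lead_setD lead_setI.
Qed.

Lemma pi_deg_antitone X D A :
  D \subset X -> A \subset D -> (pi_deg X D <= pi_deg X A)%N.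
Proof.
move=> DX AD.
have min_sub : minset_of D \subset (D :\: A) :|: minset_of A.
  apply/subsetP => x; rewrite !inE => /andP[xD /forall_inP x_min].
  rewrite xD andbT; case xA: (x \in A) => //=.
  by apply/forall_inP => z zA; apply: x_min (subsetP AD z zA).
have := leq_trans (subset_leq_card min_sub) (leq_card_setU _ _).
rewrite /pi_deg !cardsD (setIidPr DX) (setIidPr (subset_trans AD DX)) (setIidPr AD).
have := subset_leq_card AD; have := subset_leq_card DX; lia.
Qed.

End UpDownSets.

Section PiPoly.
Context {disp : Order.disp_t} {T : finPOrderType disp} {R : realType}.
Variables tau eta : T -> R.
Implicit Types (X D A I : {set T}) (e x : T).

Local Notation phi := (phi_coef tau eta).
Local Notation pi := (pi_poly tau eta).

Lemma coef_pi_poly X D k :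
  (pi X D)`_k = \sum_(I | downclosed X I && (#|I| == k)) phi D I.
Proof.
rewrite coef_sum [RHS]big_mkcondr; apply: eq_bigr => I _.
by rewrite coefZ coefXn (eq_sym k); case: (#|I| == k); rewrite ?mulr1 ?mulr0.
Qed.

Lemma phi_coef_meet D A I : I :&: D = I :&: A -> phi D I = phi A I.
Proof.
move=> IDA; rewrite /phi_coef IDA.
suff -> : maxset_of I :\: D = maxset_of I :\: A by [].
apply/setP => x; rewrite !in_setD; case xM: (x \in maxset_of I); rewrite ?andbF //.
have xI : x \in I by move: xM; rewrite inE => /andP[].
by move/setP/(_ x): IDA; rewrite !in_setI xI /= => ->.
Qed.

Lemma phi_coef_downset_lt X D A e : (forall i, 0 < tau i) -> -1 < eta e ->
  e \in X -> downset X e :&: D = [set e] -> downset X e :&: A = set0 ->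
  phi D (downset X e) < phi A (downset X e).
Proof.
move=> tau_gt0 eta_gt eX eD eA.
have tau_prod_gt0 : 0 < \prod_(i in downset X e :\: [set e]) tau i.
  by apply: prodr_gt0 => i _; exact: tau_gt0.
have e_down : e \in downset X e by rewrite inE eX lexx.
have eD' : e \in D by move: (set11 e); rewrite -eD => /setIP[].
have eA' : e \notin A.
  by apply/negP => eA'; move: (in_set0 e); rewrite -eA inE e_down eA'.
have eD0 : [set e] :\: D = set0 by apply/eqP; rewrite setD_eq0 sub1set.
have eA0 : [set e] :\: A = [set e] by apply/setDidPl; rewrite disjoints1.
rewrite /phi_coef eD eA (maxset_of_downset eX) subxx sub0set cards1 cards0 eD0 eA0.
rewrite big_set0 big_set1 expr1 expr0 !mulr1 mul1r mulN1r.
have eta_gt0 : 0 < eta e + 1 by rewrite -(opprK 1) subr_gt0.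
by rewrite -subr_gt0 opprK -{2}(mulr1 (\prod_(i in _) _)) -mulrDr mulr_gt0.
Qed.

Section Degree.
Hypotheses (tau_neq0 : forall i, tau i != 0) (eta_neq0 : forall i, eta i != 0).

Lemma phi_coef_eq0 D I : (phi D I == 0) = ~~ (I :&: D \subset maxset_of I).
Proof.
rewrite /phi_coef; case: ifP => _ /=; last by rewrite eqxx.
apply/negbTE; rewrite !mulf_neq0 ?signr_eq0 //; apply/prodf_neq0 => i _.
  exact: tau_neq0.
exact: eta_neq0.
Qed.

Lemma phi_coef_neq0_leqif {X D I} : upclosed X D -> downclosed X I -> phi D I != 0 ->
  (#|I| <= pi_deg X D ?= iff (I == lead_set X D))%N.
Proof. by rewrite phi_coef_eq0 negbK; exact: card_meet_max_leqif. Qed.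

Lemma size_pi_poly X D : upclosed X D -> size (pi X D) = (pi_deg X D).+1.
Proof.
move=> D_up; apply/anti_leq/andP; split.
  apply/leq_sizeP => k lt_deg_k; rewrite coef_pi_poly big1 // => I /andP[I_down /eqP I_k].
  apply/eqP; apply: contraTT lt_deg_k => /(phi_coef_neq0_leqif D_up I_down) [le_deg _].
  by rewrite -leqNgt -I_k.
have lead_nz : (pi X D)`_(pi_deg X D) != 0.
  rewrite coef_pi_poly (bigD1 (lead_set X D)) /=; last first.
    by rewrite lead_set_downclosed // card_lead_set eqxx.
  rewrite big1 ?addr0; first by rewrite phi_coef_eq0 negbK lead_set_meet_max.
  move=> I /andP[/andP[I_down /eqP I_deg] I_lead]; apply/eqP.
  apply: contraNT I_lead => /(phi_coef_neq0_leqif D_up I_down) [_].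
  by rewrite I_deg eqxx => <-.
rewrite ltnNge; apply: contra lead_nz => /leq_sizeP/(_ _ (leqnn _)) ->.
by rewrite eqxx.
Qed.

End Degree.

Section FirstDifference.
Context {X D A : {set T}} {s : nat}.
Hypotheses (D_up : upclosed X D) (A_up : upclosed X A) (AD : A \subset D).
Hypothesis s_min : {in D :\: A, forall x, (s <= #|downset X x|)%N}.

Lemma downclosed_meet_diff {I x} : downclosed X I -> x \in I -> x \in D :\: A ->
  (#|I| <= s)%N -> I = downset X x /\ #|I| = s.
Proof.
move=> I_down xI xDA le_Is.
have [le_xI eq_xI] := subset_leqif_cards (downset_subset I_down xI).
have le_sx := s_min _ xDA.
have I_s : #|I| = s by apply/eqP; rewrite eqn_leq le_Is (leq_trans le_sx le_xI).
by split=> //; apply/esym/eqP; rewrite -eq_xI eqn_leq le_xI I_s le_sx.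
Qed.

Lemma phi_coef_avoid I : [disjoint I & D :\: A] -> phi D I = phi A I.
Proof.
move=> I_avoid; apply: phi_coef_meet; apply/setP => x; rewrite !in_setI.
case xI: (x \in I) => //=; apply/idP/idP => [xD | /(subsetP AD)//].
apply: contraTT I_avoid => xA; rewrite -setI_eq0; apply/set0Pn.
by exists x; rewrite !inE xI xD xA.
Qed.

Lemma phi_coef_low I : downclosed X I -> (#|I| < s)%N -> phi D I = phi A I.
Proof.
move=> I_down lt_Is; apply: phi_coef_avoid; rewrite -setI_eq0.
apply/set0Pn => -[x /setIP[xI xDA]].
have [_ I_s] := downclosed_meet_diff I_down xI xDA (ltnW lt_Is).
by rewrite I_s ltnn in lt_Is.
Qed.

Lemma downsetI_minimal e :
  e \in D :\: A -> #|downset X e| = s -> downset X e :&: D = [set e].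
Proof.
move=> eDA e_s; have /setDP[eD eA] := eDA.
have eX := subsetP (upclosed_sub D_up) e eD.
apply/setP => x; rewrite in_setI in_set1; apply/andP/eqP => [[xe xD] | ->].
  have /[!inE] /andP[_ le_xe] := xe.
  have xDA : x \in D :\: A.
    rewrite inE xD andbT; apply: contraNN eA => xA.
    exact: upclosed_mem A_up xA eX le_xe.
  have [e_x _] := downclosed_meet_diff (downset_downclosed X e) xe xDA (eq_leq e_s).
  have : e \in downset X x by rewrite -e_x inE eX lexx.
  by rewrite inE => /andP[_ le_ex]; apply/eqP; rewrite eq_le le_xe le_ex.
by rewrite inE eX lexx.
Qed.

Hypotheses (tau_gt0 : forall i, 0 < tau i) (eta_gt : forall i, -1 < eta i).

Lemma phi_coef_minimal_lt e : e \in D :\: A -> #|downset X e| = s ->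
  phi D (downset X e) < phi A (downset X e).
Proof.
move=> eDA e_s; have /setDP[eD eA] := eDA.
have eX := subsetP (upclosed_sub D_up) e eD.
apply: phi_coef_downset_lt => //; first exact: downsetI_minimal.
exact: downsetI_upclosed.
Qed.

Lemma phi_coef_le I : downclosed X I -> #|I| = s -> phi D I <= phi A I.
Proof.
move=> I_down I_s; have [I_avoid|[x /setIP[xI xDA]]] := set_0Vmem (I :&: (D :\: A)).
  by rewrite phi_coef_avoid // -setI_eq0 I_avoid.
have [I_x _] := downclosed_meet_diff I_down xI xDA (eq_leq I_s).
by rewrite I_x in I_s *; apply/ltW/phi_coef_minimal_lt.
Qed.

Lemma coef_pi_poly_low k : (k < s)%N -> (pi X D)`_k = (pi X A)`_k.
Proof.
move=> lt_ks; rewrite !coef_pi_poly; apply: eq_bigr => I /andP[I_down /eqP I_k].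
by apply: phi_coef_low; rewrite // I_k.
Qed.

Lemma coef_pi_poly_lt {e} :
  e \in D :\: A -> #|downset X e| = s -> (pi X D)`_s < (pi X A)`_s.
Proof.
move=> eDA e_s; rewrite !coef_pi_poly.
have e_term : downclosed X (downset X e) && (#|downset X e| == s).
  by rewrite downset_downclosed e_s eqxx.
rewrite (bigD1 (downset X e) e_term) [Y in _ < Y](bigD1 (downset X e) e_term) /=.
apply: ltr_leD; first exact: phi_coef_minimal_lt.
by apply: ler_sum => I /andP[/andP[I_down /eqP I_s] _]; exact: phi_coef_le.
Qed.

End FirstDifference.
End PiPoly.

Lemma polyle_first_diff (R : realType) (f g : {poly R}) k :
  (size f <= size g)%N -> f`_k < g`_k -> (forall i, (i < k)%N -> f`_i = g`_i) ->
  polyle f g.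
Proof.
move=> le_fg lt_k eq_low; right.
move: le_fg; rewrite leq_eqVlt => /orP[/eqP eq_size|]; [right | by left].
split=> //; exists k; split=> //.
apply/modp_eq0P; rewrite -Pdiv.IdomainMonic.take_poly_modp; apply/polyP => i.
by rewrite coef_take_poly coef0 coefB; case: ifP => // /eq_low ->; rewrite subrr.
Qed.

Theorem theorem3p4 (disp : Order.disp_t) (T : finPOrderType disp) (R : realType)
  (tau eta : T -> R) :
  (forall i, 0 < tau i) -> (forall i, -1 < eta i) -> (forall i, eta i != 0) ->
  forall X D A : {set T}, upclosed X D -> upclosed X A -> A \proper D ->
  pi_poly tau eta X D != pi_poly tau eta X A /\ polyle (pi_poly tau eta X D) (pi_poly tau eta X A).
Proof.
move=> tau_gt0 eta_gt eta_neq0 X D A D_up A_up /properP[AD [e0 e0D e0A]].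
have e0DA : e0 \in D :\: A by rewrite inE e0A e0D.
have [e eDA e_min] := arg_minnP (fun x => #|downset X x|) e0DA.
have lt_coef := coef_pi_poly_lt tau eta D_up A_up AD e_min tau_gt0 eta_gt eDA erefl.
split; first by apply: contraTneq lt_coef => ->; rewrite ltxx.
apply: polyle_first_diff lt_coef (coef_pi_poly_low tau eta AD e_min).
have tau_neq0 i : tau i != 0 := lt0r_neq0 (tau_gt0 i).
rewrite !size_pi_poly // ltnS; exact: pi_deg_antitone (upclosed_sub D_up) AD.
Qed.
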